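(* Let $G$ be a graph on $[n]$ and $p$ in the Shearer region $\mathcal S$ of $G$. Then for all $A,B\subseteq[n]$, $q_A(p)\,q_B(p)\ge q_{A\cup B}(p)\,q_{A\cap B}(p)$.
   Context: Shearer notation: $\mathrm{Ind}$ is the family of independent sets of $G$ (including $\emptyset$); for $p\in\mathbb R^n$ and $I\subseteq[n]$, $p^I=\prod_{i\in I}p_i$. For $S\subseteq[n]$, $q_S(p)=\sum_{I\in\mathrm{Ind},\,S\subseteq I}(-1)^{|I\setminus S|}p^I$ (so $q_S=0$ if $S\notin\mathrm{Ind}$) and $\breve q_S(p)=\sum_{I\in\mathrm{Ind},\,I\subseteq S}(-1)^{|I|}p^I$. The Shearer region is $\mathcal S=\{p\in(0,1)^n:\breve q_S(p)>0\ \forall S\subseteq[n]\}$, which equals $\{p\in(0,1)^n: q_I(p)>0\ \forall I\in\mathrm{Ind}\}$. *)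

From HB Require Import structures.
From mathcomp Require Import all_boot all_order all_algebra.
Set Implicit Arguments. Unset Strict Implicit. Unset Printing Implicit Defensive.
Import Order.TTheory GRing.Theory Num.Theory.
Local Open Scope ring_scope.

Definition simple_graph (n : nat) (e : rel 'I_n) : Prop :=
  symmetric e /\ irreflexive e.

Definition indep (n : nat) (e : rel 'I_n) (I : {set 'I_n}) : bool :=
  [forall x in I, forall y in I, ~~ e x y].

Definition pmon (R : ringType) (n : nat) (p : 'I_n -> R) (I : {set 'I_n}) : R :=
  \prod_(i in I) p i.

Definition qS (R : ringType) (n : nat) (e : rel 'I_n) (p : 'I_n -> R)
    (S : {set 'I_n}) : R :=
  \sum_(I : {set 'I_n} | indep e I && (S \subset I))
     (-1) ^+ #|I :\: S| * pmon p I.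

Definition qbreve (R : ringType) (n : nat) (e : rel 'I_n) (p : 'I_n -> R)
    (S : {set 'I_n}) : R :=
  \sum_(I : {set 'I_n} | indep e I && (I \subset S))
     (-1) ^+ #|I| * pmon p I.

Definition shearer (R : realFieldType) (n : nat) (e : rel 'I_n) (p : 'I_n -> R)
  : Prop :=
  (forall i, 0 < p i < 1) /\ (forall S : {set 'I_n}, 0 < qbreve e p S).

From HB Require Import structures.
From mathcomp Require Import all_boot all_order all_algebra.
From mathcomp Require Import lra.
Import Order.TTheory GRing.Theory Num.Theory.
Local Open Scope ring_scope.
Set Implicit Arguments.
Unset Strict Implicit.
Unset Printing Implicit Defensive.

(* For independent S, q_S(p) = p^S * q̆(Γ S), where Γ S is the set of vertices
   outside the closed neighbourhood of S.  Since Γ (A ∪ B) = Γ A ∩ Γ B and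
   Γ (A ∩ B) ⊇ Γ A ∪ Γ B, the theorem follows from two properties of q̆ on the
   Shearer region: it is antitone and log-submodular.  Log-submodularity is
   equivalent to the increments q̆(T + v) / q̆(T) being antitone in T, proved
   by induction on |T|: the recursion q̆(S + v) = q̆(S) - p_v q̆(S ∖ N(v))
   reduces it to q̆(S ∖ N(v)) / q̆(S) <= q̆(T ∖ N(v)) / q̆(T) for S ⊆ T, which is
   log-submodularity among subsets of T and so only needs the increments at
   proper subsets of T. *)

Lemma big_supsets (R : Type) (idx : R) (op : Monoid.com_law idx)
    (T : finType) (A : {set T}) (P : pred {set T}) (F : {set T} -> R) :
  \big[op/idx]_(I | P I && (A \subset I)) F I
    = \big[op/idx]_(J | P (A :|: J) && [disjoint A & J]) F (A :|: J).
Proof.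
rewrite (reindex_onto (fun J => A :|: J) (fun I => I :\: A)) /=; last first.
  by move=> I /andP[_ /setUidPr sAI]; rewrite setDE setUIr setUCr setIT.
apply: eq_bigl => J; rewrite subsetUl andbT; congr (_ && _).
rewrite setDUl setDv set0U disjoint_sym.
by apply/eqP/idP => /setDidPl.
Qed.

Lemma subsetU1_notin (T : finType) (v : T) (I S : {set T}) :
  v \notin I -> (I \subset v |: S) = (I \subset S).
Proof.
by move=> vI; rewrite -subDset (setDidPl _) // disjoint_sym disjoints1.
Qed.

Lemma pmonUI (R : comRingType) (n : nat) (p : 'I_n -> R) (A B : {set 'I_n}) :
  pmon p (A :|: B) * pmon p (A :&: B) = pmon p A * pmon p B.
Proof.
rewrite /pmon (big_setID (A := A :|: B) A) (big_setID (A := B) A) setUK setDUl setDv set0U.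
by rewrite setIC /= mulrAC mulrA.
Qed.

Lemma pmonU (R : comRingType) (n : nat) (p : 'I_n -> R) (A B : {set 'I_n}) :
  [disjoint A & B] -> pmon p (A :|: B) = pmon p A * pmon p B.
Proof.
by rewrite -setI_eq0 -pmonUI => /eqP->; rewrite /pmon big_set0 mulr1.
Qed.

Lemma pmon_ge0 (R : numDomainType) (n : nat) (p : 'I_n -> R) (A : {set 'I_n}) :
  (forall i, 0 <= p i) -> 0 <= pmon p A.
Proof. by move=> p_ge0; apply: prodr_ge0. Qed.

Section Independence.

Variables (n : nat) (e : rel 'I_n).

Definition nbhd (v : 'I_n) : {set 'I_n} := [set w | e v w].

Definition cnbhd (S : {set 'I_n}) : {set 'I_n} :=
  S :|: \bigcup_(s in S) nbhd s.

Lemma cnbhdU (A B : {set 'I_n}) : cnbhd (A :|: B) = cnbhd A :|: cnbhd B.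
Proof. by rewrite /cnbhd bigcup_setU setUACA. Qed.

Lemma cnbhdS (A B : {set 'I_n}) : A \subset B -> cnbhd A \subset cnbhd B.
Proof. by move=> /setUidPr <-; rewrite cnbhdU subsetUl. Qed.

Lemma indepP (I : {set 'I_n}) : reflect {in I &, forall x y, ~~ e x y} (indep e I).
Proof.
apply: (iffP forallP) => [indepI x y xI yI | nadj x].
  by move/implyP: (indepI x) => /(_ xI)/forallP/(_ y)/implyP/(_ yI).
by apply/implyP=> xI; apply/forallP=> y; apply/implyP; apply: nadj.
Qed.

Lemma indepS (I J : {set 'I_n}) : I \subset J -> indep e J -> indep e I.
Proof.
by move=> /subsetP sIJ /indepP indepJ; apply/indepP=> x y /sIJ xJ /sIJ; apply: indepJ.
Qed.

Lemma indep_set1 (v : 'I_n) : irreflexive e -> indep e [set v].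
Proof. by move=> e_irr; apply/indepP=> x y /set1P-> /set1P->; rewrite e_irr. Qed.

Hypothesis e_sym : symmetric e.

Lemma indepU (A B : {set 'I_n}) :
  indep e (A :|: B) =
    [&& indep e A, indep e B & [disjoint B & \bigcup_(a in A) nbhd a]].
Proof.
apply/indepP/and3P => [indepAB | [/indepP indepA /indepP indepB dis]].
  split; [ |  | rewrite -setI_eq0; apply/eqP/setP=> y; rewrite !inE].
  - by apply/indepP=> x y xA yA; apply: indepAB; rewrite inE ?xA ?yA.
  - by apply/indepP=> x y xB yB; apply: indepAB; rewrite inE ?xB ?yB orbT.
  - apply/negP=> /andP[yB /bigcupP[a aA]]; rewrite inE; apply/negP.
    by apply: indepAB; rewrite inE ?aA ?yB ?orbT.
have nadj a b : a \in A -> b \in B -> ~~ e a b.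
  move=> aA bB; apply/negP=> eab; have := disjointFr dis bB.
  by move=> /negP; apply; apply/bigcupP; exists a; rewrite ?inE.
move=> x y /setUP[xA|xB] /setUP[yA|yB]; [exact: indepA | exact: nadj | | exact: indepB].
by rewrite e_sym; apply: nadj.
Qed.

End Independence.

Section ShearerRegion.

Variables (R : realFieldType) (n : nat) (e : rel 'I_n) (p : 'I_n -> R).
Hypotheses (e_sym : symmetric e) (e_irr : irreflexive e).

Local Notation qb := (qbreve e p).

Lemma qbreve_setU1 (v : 'I_n) (S : {set 'I_n}) :
  v \notin S -> qb (v |: S) = qb S - p v * qb (S :\: nbhd e v).
Proof.
move=> vS; rewrite /qbreve (bigID (fun I : {set 'I_n} => v \in I)) /= addrC; congr (_ + _).
  apply: eq_bigl => I; rewrite -andbA; have [vI|vI] := boolP (v \in I).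
    by rewrite !andbF; apply/esym/negbTE/nandP; right; apply: contra vS => /subsetP->.
  by rewrite andbT subsetU1_notin.
rewrite mulr_sumr -sumrN.
under eq_bigl do rewrite -sub1set.
rewrite big_supsets; apply: eq_big => [J | J].
  rewrite disjoints1 indepU // indep_set1 // big_set1 subUset sub1set setU11 /= subsetD.
  have [vJ|vJ] := boolP (v \in J); last by rewrite subsetU1_notin //= andbT andbAC -andbA.
  rewrite andbF; apply/esym/negbTE; apply: contra vS => /and3P[_ /subsetP sJS _].
  exact: sJS.
case/andP=> _ vJ; rewrite disjoints1 in vJ.
by rewrite cardsU1 vJ /pmon big_setU1 // exprS mulN1r mulNr mulrCA.
Qed.

Lemma qS_indep (S : {set 'I_n}) :
  indep e S -> qS e p S = pmon p S * qb (~: cnbhd e S).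
Proof.
move=> indepS; rewrite /qS /qbreve big_supsets mulr_sumr; apply: eq_big => [J | J].
  rewrite indepU // indepS /cnbhd setCU subsetI -!disjoints_subset.
  by rewrite /= [[disjoint S & J]]disjoint_sym andbAC -andbA.
case/andP=> _ dSJ.
rewrite setDUl setDv set0U (setDidPl _) 1?disjoint_sym // pmonU //.
by rewrite mulrCA.
Qed.

Lemma qS_nindep (S : {set 'I_n}) : ~~ indep e S -> qS e p S = 0.
Proof.
move=> nindepS; rewrite /qS big1 // => I /andP[indepI sSI].
by rewrite (indepS sSI indepI) in nindepS.
Qed.

Hypotheses (p_ge0 : forall i, 0 <= p i) (qb_gt0 : forall S, 0 < qb S).

Lemma qbreve_setU1_le (v : 'I_n) (S : {set 'I_n}) : qb (v |: S) <= qb S.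
Proof.
have [vS|vS] := boolP (v \in S).
  by have /setUidPr-> : [set v] \subset S by rewrite sub1set.
by rewrite qbreve_setU1 // gerBl mulr_ge0 // ltW.
Qed.

Lemma qbreve_le_subset (X Y : {set 'I_n}) : X \subset Y -> qb Y <= qb X.
Proof.
have [k] := ubnP #|Y :\: X|; elim: k Y => // k IH Y ltYXk sXY.
have [/eqP|[w wYX]] := set_0Vmem (Y :\: X).
  by rewrite setD_eq0 => sYX; rewrite (eqP (_ : Y == X)) // eqEsubset sYX.
have /setDP[wY wX] := wYX; rewrite -(setD1K wY).
apply: le_trans (qbreve_setU1_le _ _) (IH _ _ _); last by rewrite subsetD1 sXY.
by rewrite setDDl setUC -setDDl -ltnS (leq_trans _ ltYXk) // ltnS proper_card ?properD1.
Qed.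

(* The multiplicative form of: log q̆ has diminishing increments at T. *)
Definition qbreve_diminishing_at (T : {set 'I_n}) : Prop :=
  forall (S : {set 'I_n}) (v : 'I_n), S \subset T -> v \notin T ->
  qb (v |: T) * qb S <= qb (v |: S) * qb T.

Lemma qbreve_submod_of_diminishing (X Y : {set 'I_n}) :
    (forall T : {set 'I_n}, T \proper X :|: Y -> qbreve_diminishing_at T) ->
  qb (X :|: Y) * qb (X :&: Y) <= qb X * qb Y.
Proof.
have [k] := ubnP #|Y :\: X|; elim: k Y => // k IH Y ltYXk dimY.
have [/eqP|[w wYX]] := set_0Vmem (Y :\: X).
  by rewrite setD_eq0 => sYX; rewrite (setUidPl sYX) (setIidPr sYX).
have /setDP[wY wX] := wYX.
have wXY : w \notin X :|: Y :\ w by rewrite in_setU negb_or wX setD11.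
have eXY : X :|: Y = w |: (X :|: Y :\ w) by rewrite setUCA setD1K.
have eXIY : X :&: Y = X :&: (Y :\ w).
  by rewrite setIDA; apply/esym/setDidPl; rewrite disjoint_sym disjoints1 inE negb_and wX.
have ltXY : X :|: Y :\ w \proper X :|: Y.
  by rewrite eXY properUr // sub1set.
have ltYXw : (#|(Y :\ w) :\: X| < k)%N.
  by rewrite setDDl setUC -setDDl -ltnS (leq_trans _ ltYXk) // ltnS proper_card ?properD1.
have IHw := IH (Y :\ w) ltYXw (fun T sT => dimY T (proper_trans sT ltXY)).
have := dimY _ ltXY (Y :\ w) w (subsetUr _ _) wXY; rewrite -eXY setD1K // => dimw.
rewrite eXIY -(ler_pM2r (qb_gt0 (X :|: Y :\ w))).
have := ler_wpM2l (ltW (qb_gt0 (X :|: Y))) IHw.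
have := ler_wpM2l (ltW (qb_gt0 X)) dimw.
lra.
Qed.

Lemma qbreve_diminishing (T : {set 'I_n}) : qbreve_diminishing_at T.
Proof.
have [k] := ubnP #|T|; elim: k T => // k IH T ltTk S v sST vT.
have submod X Y : X :|: Y \subset T ->
    qb (X :|: Y) * qb (X :&: Y) <= qb X * qb Y.
  move=> sXYT; apply: qbreve_submod_of_diminishing => U ltU; apply: IH.
  by rewrite -ltnS (leq_trans _ ltTk) // ltnS proper_card ?(proper_sub_trans ltU).
have ratio W : qb (S :\: W) * qb T <= qb (T :\: W) * qb S.
  have sTWS : T :\: W :|: S \subset T by rewrite subUset subsetDl sST.
  have := submod _ _ sTWS; rewrite setIDAC (setIidPr sST) mulrC; apply: le_trans.
  by apply: ler_wpM2l; [exact: ltW | exact: qbreve_le_subset].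
have vS : v \notin S by apply: contra vT; apply: (subsetP sST).
rewrite !qbreve_setU1 //.
have := ler_wpM2l (p_ge0 v) (ratio (nbhd e v)).
lra.
Qed.

Lemma qbreve_submod (X Y : {set 'I_n}) :
  qb (X :|: Y) * qb (X :&: Y) <= qb X * qb Y.
Proof. by apply: qbreve_submod_of_diminishing => T _; apply: qbreve_diminishing. Qed.

Lemma qS_ge0 (S : {set 'I_n}) : 0 <= qS e p S.
Proof.
have [indepS|nindepS] := boolP (indep e S); last by rewrite qS_nindep.
by rewrite qS_indep // mulr_ge0 ?pmon_ge0 ?ltW.
Qed.

End ShearerRegion.

Theorem mainTheorem11 (R : realFieldType) (n : nat) (e : rel 'I_n)
    (p : 'I_n -> R) :
  simple_graph e -> shearer e p ->
  forall A B : {set 'I_n},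
    qS e p (A :|: B) * qS e p (A :&: B) <= qS e p A * qS e p B.
Proof.
move=> [e_sym e_irr] [p_bounds qb_gt0] A B.
have p_ge0 i : 0 <= p i by case/andP: (p_bounds i) => /ltW.
have [indepAB|nindepAB] := boolP (indep e (A :|: B)); last first.
  by rewrite qS_nindep // mul0r mulr_ge0 ?qS_ge0.
have indepA := indepS (subsetUl A B) indepAB.
have indepB := indepS (subsetUr A B) indepAB.
have indepAIB := indepS (subset_trans (subsetIl A B) (subsetUl A B)) indepAB.
rewrite !qS_indep // mulrACA pmonUI [_ * qbreve _ _ _ * _]mulrACA.
apply: ler_wpM2l; first by rewrite mulr_ge0 ?pmon_ge0.
rewrite cnbhdU setCU.
apply: le_trans (qbreve_submod e_sym e_irr p_ge0 qb_gt0 (~: cnbhd e A) (~: cnbhd e B)).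
rewrite mulrC; apply: ler_wpM2r; first exact: ltW.
apply: qbreve_le_subset => //.
by rewrite -setCI setCS subsetI !cnbhdS ?subsetIl ?subsetIr.
Qed.
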